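(* Let $\ell$ be an integer with $1<\ell<\infty$. Then under $T_\ell$: (1) for every $k\ge1$ the word $F_k$ is a soliton of speed $\min(\ell,k)$, i.e. $T_\ell$ maps $F_k$ at $p$ to $F_k$ at $p+\min(\ell,k)$; (2) for every slow basic soliton $A$ (a nonempty word in the letters $F,B_a,U_a$, $a\ge1$, containing neither $FF$ nor $FU_a$ consecutively), $T_\ell$ maps $A$ at $p$ to $A$ at $p+1$, i.e. it acts exactly as $T_\infty$ does.
   Context: Box-basket-ball system. A site state is a triple $(a,b,c)$ of nonnegative integers with $a=b-c+1$ (one box, $b$ baskets, $c$ balls). $V=(1,0,0)$, $F=(0,0,1)$, $B_a=(a+1,a,0)$, $U_a=(a,a,1)$ ($a\ge1$), $F_k=F\cdots F$ ($k$ letters). A state is a sequence $(S_i)_{i\in\mathbb Z}$ of site states, all but finitely many equal to $V$. For a word $A=A_1\cdots A_n$, ''$A$ at $p$'' is the state with $S_{p+j-1}=A_j$ ($1\le j\le n$), vacuum elsewhere. The map $R$: for a carrier $(a,b,c)$ and site $(d,e,f)$, $R$ produces a site $(d',e',f')$ and carrier $(a',b',c')$ with $d'=d+\min(a+b,a+c,b+f)-\min(e+c,d+c,d+b)$, $e'=e+\min(a+b,a+c,b+f)-\min(a+e,d+f,e+f)$, $f'=f+\min(e+c,d+c,d+b)-\min(a+e,d+f,e+f)$, $a'=a-\min(a+b,a+c,b+f)+\min(e+c,d+c,d+b)$, $b'=b-\min(a+b,a+c,b+f)+\min(a+e,d+f,e+f)$, $c'=c-\min(e+c,d+c,d+b)+\min(a+e,d+f,e+f)$.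 Time evolution $T_\ell$ (integer $\ell\ge1$): a carrier starting in state $u_\ell=(\ell,0,0)$ at the far left passes the sites from left to right, each site being updated by $R$; the new state consists of the updated sites. Time evolution $T_\infty$: same with carrier initially $(\infty,0,0)$, where the formulas become $d'=d+b+f-\min(e+c,d+c,d+b)$, $e'=e+b-\min(d,e)$, $f'=\min(e+c,d+c,d+b)-\min(d,e)$, $b'=\min(d,e)$, $c'=c+f+\min(d,e)-\min(e+c,d+c,d+b)$, $a'=\infty$. *)

From Stdlib Require Import ZArith List Bool.
Import ListNotations.
Open Scope Z_scope.

(* A site state / carrier state (a,b,c). Arithmetic is done in Z so that the
   update formulas are the literal ones of the paper (no truncation). *)
Definition site := (Z * Z * Z)%type.

Definition V : site := (1, 0, 0).
Definition Fs : site := (0, 0, 1).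
Definition Bs (a : Z) : site := (a + 1, a, 0).
Definition Us (a : Z) : site := (a, a, 1).

(* The combinatorial R: carrier (a,b,c), site (d,e,f) |-> (site', carrier'). *)
Definition Rmap (car s : site) : site * site :=
  let '(a, b, c) := car in
  let '(d, e, f) := s in
  let m1 := Z.min (Z.min (a + b) (a + c)) (b + f) in
  let m2 := Z.min (Z.min (e + c) (d + c)) (d + b) in
  let m3 := Z.min (Z.min (a + e) (d + f)) (e + f) in
  ((d + m1 - m2, e + m1 - m3, f + m2 - m3),
   (a - m1 + m2, b - m1 + m3, c - m2 + m3)).

(* A state: a function Z -> site (equal to V outside a finite set). *)
Definition state := Z -> site.

Fixpoint run (car : site) (S : state) (start : Z) (n : nat) : site :=
  match n with
  | O => car
  | Datatypes.S n' => run (snd (Rmap car (S start))) S (start + 1) n'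
  end.

Definition carrier_at (l : Z) (S : state) (lo i : Z) : site :=
  run (l, 0, 0) S lo (Z.to_nat (i - lo)).

(* T_l applied to S, with the carrier starting at position lo; this is the
   time evolution T_l whenever every site left of lo is vacuum. *)
Definition T (l : Z) (S : state) (lo : Z) : state :=
  fun i => fst (Rmap (carrier_at l S lo i) (S i)).

Definition vacuum_left_of (S : state) (lo : Z) : Prop :=
  forall i, i < lo -> S i = V.

Inductive letter := LF | LB (a : Z) | LU (a : Z).

Definition letter_site (x : letter) : site :=
  match x with LF => Fs | LB a => Bs a | LU a => Us a end.

Definition word_at (A : list letter) (p : Z) : state :=
  fun i => if andb (p <=? i) (i <? p + Z.of_nat (length A))
           then letter_site (nth (Z.to_nat (i - p)) A LF)
           else V.

Definition Fk (k : nat) : list letter := repeat LF k.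

Definition letter_ok (x : letter) : Prop :=
  match x with LF => True | LB a => 1 <= a | LU a => 1 <= a end.

Definition bad_pair (x y : letter) : Prop :=
  match x, y with
  | LF, LF => True
  | LF, LU _ => True
  | _, _ => False
  end.

Definition slow_basic_soliton (A : list letter) : Prop :=
  A <> [] /\ Forall letter_ok A /\
  (forall j, (S j < length A)%nat -> ~ bad_pair (nth j A LF) (nth (S j) A LF)).

Definition maps_to (l : Z) (A : list letter) (p : Z) (A' : list letter) (q : Z) : Prop :=
  forall lo, vacuum_left_of (word_at A p) lo ->
    forall i, T l (word_at A p) lo i = word_at A' q i.

(* In both cases the carrier of T_l is known in closed form at every site, and
   the new state is read off from one application of R there.  For a slow
   basic soliton the carrier arriving at site i is the old content of site
   i - 1 with l - 1 extra boxes; R swaps it with the content of site i, so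
   every letter moves one step to the right.  The excluded pairs FF and FU_a
   are exactly those for which this swap fails.  For F_k the carrier holds
   (l - c, 0, c) where c is the number of balls it carries: c grows by one on
   each F up to the capacity s = min(l, k), stays at s, and is unloaded one
   ball per vacant site, so the block of balls reappears s sites further. *)
From Stdlib Require Import ZArith List Lia.
Open Scope Z_scope.

Ltac solve_site := repeat (apply pair_equal_spec; split); lia.

Lemma run_succ n car S st :
  run car S st (Datatypes.S n) = snd (Rmap (run car S st n) (S (st + Z.of_nat n))).
Proof.
  revert car st; induction n as [|n IHn]; intros car st.
  - simpl. rewrite Z.add_0_r. reflexivity.
  - change (run car S st (Datatypes.S (Datatypes.S n)))
      with (run (snd (Rmap car (S st))) S (st + 1) (Datatypes.S n)).
    rewrite IHn. simpl.
    replace (st + 1 + Z.of_nat n) with (st + Z.pos (Pos.of_succ_nat n)) by lia.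
    reflexivity.
Qed.

Lemma carrier_at_succ l S lo i : lo <= i ->
  carrier_at l S lo (i + 1) = snd (Rmap (carrier_at l S lo i) (S i)).
Proof.
  intro Hi. unfold carrier_at.
  replace (Z.to_nat (i + 1 - lo)) with (Datatypes.S (Z.to_nat (i - lo))) by lia.
  rewrite run_succ. do 3 f_equal. lia.
Qed.

Lemma carrier_at_le l S lo i : i <= lo -> carrier_at l S lo i = (l, 0, 0).
Proof.
  intro Hi. unfold carrier_at. replace (Z.to_nat (i - lo)) with 0%nat by lia.
  reflexivity.
Qed.

Lemma carrier_at_eq l S lo (g : Z -> site) :
  (forall i, i <= lo -> g i = (l, 0, 0)) ->
  (forall i, lo <= i -> snd (Rmap (g i) (S i)) = g (i + 1)) ->
  forall i, carrier_at l S lo i = g i.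
Proof.
  intros Hleft Hstep.
  assert (Hright : forall n, carrier_at l S lo (lo + Z.of_nat n) = g (lo + Z.of_nat n)).
  { induction n as [|n IHn].
    - rewrite Z.add_0_r, carrier_at_le, Hleft by lia. reflexivity.
    - replace (lo + Z.of_nat (Datatypes.S n)) with (lo + Z.of_nat n + 1) by lia.
      rewrite carrier_at_succ, IHn by lia. apply Hstep. lia. }
  intro i. destruct (Z_le_gt_dec i lo) as [Hi|Hi].
  - rewrite carrier_at_le, Hleft by lia. reflexivity.
  - replace i with (lo + Z.of_nat (Z.to_nat (i - lo))) by lia. apply Hright.
Qed.

Lemma T_eq l S lo (g : Z -> site) :
  (forall i, i <= lo -> g i = (l, 0, 0)) ->
  (forall i, lo <= i -> snd (Rmap (g i) (S i)) = g (i + 1)) ->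
  forall i, T l S lo i = fst (Rmap (g i) (S i)).
Proof.
  intros Hleft Hstep i. unfold T.
  rewrite (carrier_at_eq l S lo g) by assumption. reflexivity.
Qed.

Definition add_boxes (n : Z) (s : site) : site :=
  let '(a, b, c) := s in (a + n, b, c).

Definition opt_site (o : option letter) : site :=
  match o with None => V | Some x => letter_site x end.

Definition opt_ok (o : option letter) : Prop :=
  match o with None => True | Some x => letter_ok x end.

Definition opt_bad_pair (o1 o2 : option letter) : Prop :=
  match o1, o2 with Some x, Some y => bad_pair x y | _, _ => False end.

Lemma Rmap_add_boxes_swap l (hl : 1 < l) ox oy :
  opt_ok ox -> opt_ok oy -> ~ opt_bad_pair ox oy ->
  Rmap (add_boxes (l - 1) (opt_site ox)) (opt_site oy)
  = (opt_site ox, add_boxes (l - 1) (opt_site oy)).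
Proof.
  destruct ox as [[|a|a]|], oy as [[|b|b]|];
    cbn [opt_ok opt_bad_pair letter_ok bad_pair opt_site letter_site]; intros; try tauto;
    unfold Rmap, add_boxes, V, Fs, Bs, Us; cbn -[Z.add Z.sub Z.min]; solve_site.
Qed.

Definition letter_at (A : list letter) (p i : Z) : option letter :=
  if andb (p <=? i) (i <? p + Z.of_nat (length A))
  then Some (nth (Z.to_nat (i - p)) A LF) else None.

Lemma word_at_letter_at A p i : word_at A p i = opt_site (letter_at A p i).
Proof. unfold word_at, letter_at. destruct (andb _ _); reflexivity. Qed.

Lemma word_at_succ A p i : word_at A (p + 1) i = word_at A p (i - 1).
Proof.
  unfold word_at.
  replace (p + 1 <=? i) with (p <=? i - 1)
    by (destruct (Z.leb_spec (p + 1) i), (Z.leb_spec p (i - 1)); auto; lia).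
  replace (i <? p + 1 + Z.of_nat (length A)) with (i - 1 <? p + Z.of_nat (length A))
    by (destruct (Z.ltb_spec (i - 1) (p + Z.of_nat (length A))),
          (Z.ltb_spec i (p + 1 + Z.of_nat (length A))); auto; lia).
  replace (i - (p + 1)) with (i - 1 - p) by lia. reflexivity.
Qed.

Lemma letter_at_Some A p i x : letter_at A p i = Some x ->
  p <= i < p + Z.of_nat (length A) /\ x = nth (Z.to_nat (i - p)) A LF.
Proof.
  unfold letter_at. destruct (Z.leb_spec p i), (Z.ltb_spec i (p + Z.of_nat (length A)));
    simpl; intro Hx; inversion Hx; auto; lia.
Qed.

Lemma letter_at_ok A p i : Forall letter_ok A -> opt_ok (letter_at A p i).
Proof.
  intro HA. destruct (letter_at A p i) eqn:E; simpl; auto.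
  apply letter_at_Some in E as [Hi ->]. rewrite Forall_forall in HA.
  apply HA, nth_In. lia.
Qed.

Lemma letter_at_not_bad_pair A p i : slow_basic_soliton A ->
  ~ opt_bad_pair (letter_at A p (i - 1)) (letter_at A p i).
Proof.
  intros [_ [_ Hgood]].
  destruct (letter_at A p (i - 1)) eqn:E1; simpl; auto.
  destruct (letter_at A p i) eqn:E2; simpl; auto.
  apply letter_at_Some in E1 as [Hi1 ->]. apply letter_at_Some in E2 as [Hi2 ->].
  replace (Z.to_nat (i - p)) with (Datatypes.S (Z.to_nat (i - 1 - p))) by lia.
  apply Hgood. lia.
Qed.

Theorem slow_soliton_shift l (hl : 1 < l) A :
  slow_basic_soliton A -> forall p, maps_to l A p A (p + 1).
Proof.
  intros HA p lo Hvac i.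
  assert (HA_ok : Forall letter_ok A) by apply HA.
  assert (Hswap : forall j, Rmap (add_boxes (l - 1) (word_at A p (j - 1))) (word_at A p j)
                            = (word_at A p (j - 1), add_boxes (l - 1) (word_at A p j))).
  { intro j. rewrite !word_at_letter_at.
    apply Rmap_add_boxes_swap; auto using letter_at_ok, letter_at_not_bad_pair. }
  rewrite (T_eq l _ lo (fun j => add_boxes (l - 1) (word_at A p (j - 1)))).
  - rewrite Hswap, word_at_succ. reflexivity.
  - intros j Hj. rewrite Hvac by lia. cbn -[Z.add Z.sub]. solve_site.
  - intros j _. rewrite Hswap. replace (j + 1 - 1) with j by lia. reflexivity.
Qed.

Lemma word_at_Fk k p i : word_at (Fk k) p i =
  if andb (p <=? i) (i <? p + Z.of_nat k) then Fs else V.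
Proof.
  unfold word_at, Fk. rewrite repeat_length.
  destruct (andb _ _); auto. rewrite nth_repeat. reflexivity.
Qed.

Lemma Fk_vacuum_left_le k p lo : (1 <= k)%nat ->
  vacuum_left_of (word_at (Fk k) p) lo -> lo <= p.
Proof.
  intros Hk Hvac. destruct (Z_lt_le_dec p lo) as [Hp|Hp]; auto.
  specialize (Hvac p Hp). rewrite word_at_Fk in Hvac.
  destruct (Z.leb_spec p p), (Z.ltb_spec p (p + Z.of_nat k)); try lia.
  discriminate.
Qed.

(* Number of balls the carrier holds on arrival at site [i], for the block of
   [K] balls at [p] moving with speed [s]. *)
Definition Fk_load (p K s i : Z) : Z := Z.max 0 (Z.min (Z.min (i - p) s) (p + K + s - i)).

Theorem Fk_shift l (hl : 1 < l) k : (1 <= k)%nat ->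
  forall p, maps_to l (Fk k) p (Fk k) (p + Z.min l (Z.of_nat k)).
Proof.
  intros Hk p lo Hvac i.
  pose proof (Fk_vacuum_left_le k p lo Hk Hvac) as Hlo.
  set (K := Z.of_nat k) in *.
  set (c := Fk_load p K (Z.min l K)).
  rewrite (T_eq l _ lo (fun j => (l - c j, 0, c j))).
  - rewrite !word_at_Fk. fold K. unfold c, Fk_load.
    destruct (Z.leb_spec p i), (Z.ltb_spec i (p + K)),
      (Z.leb_spec (p + Z.min l K) i), (Z.ltb_spec i (p + Z.min l K + K)); cbn [andb];
      unfold Rmap, Fs, V; cbv beta iota zeta; solve_site.
  - intros j Hj. unfold c, Fk_load. solve_site.
  - intros j _. rewrite word_at_Fk. fold K. unfold c, Fk_load.
    destruct (Z.leb_spec p j), (Z.ltb_spec j (p + K)); cbn [andb];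
      unfold Rmap, Fs, V; cbv beta iota zeta; solve_site.
Qed.

Theorem mainTheorem6 (l : Z) (hl : 1 < l) :
  (forall (k : nat), (1 <= k)%nat -> forall p : Z,
      maps_to l (Fk k) p (Fk k) (p + Z.min l (Z.of_nat k))) /\
  (forall (A : list letter), slow_basic_soliton A -> forall p : Z,
      maps_to l A p A (p + 1)).
Proof.
  split.
  - exact (Fk_shift l hl).
  - exact (slow_soliton_shift l hl).
Qed.
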